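(* Let $A\in\mathbb{R}^{n\times n}$ be symmetric with smallest eigenvalue $\alpha_n$, $g\in\mathbb{R}^n$ nonzero, $\Delta>0$, and let $x_{opt}$ be a global minimizer of $\frac12x^TAx+x^Tg$ subject to $\|x\|\le\Delta$ with multiplier $\lambda_{opt}$, in the easy case $\lambda_{opt}>-\alpha_n$. Suppose $\|x_{opt}\|=\Delta$. Let $M=\begin{pmatrix}-A&gg^T/\Delta^2\\ I&-A\end{pmatrix}$ and let $y=(y_1^T,y_2^T)^T\in\mathbb{R}^{2n}$ ($y_1,y_2\in\mathbb{R}^n$) be a unit-length eigenvector of $M$ associated with $\lambda_{opt}$. Then, with $A_{opt}=A+\lambda_{opt}I$, $$\frac{\|y_1\|}{\|y_2\|}=\frac{\Delta}{\|A_{opt}^{-1}x_{opt}\|}.$$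
   Context: Norms are Euclidean. The multiplier satisfies $\lambda_{opt}\ge0$, $(A+\lambda_{opt}I)x_{opt}=-g$, $\lambda_{opt}(\Delta-\|x_{opt}\|)=0$, $A+\lambda_{opt}I\succeq0$. *)

From HB Require Import structures.
From mathcomp Require Import all_boot all_order all_algebra.
Set Implicit Arguments. Unset Strict Implicit. Unset Printing Implicit Defensive.
Import Order.TTheory GRing.Theory Num.Theory.
Local Open Scope ring_scope.

Definition vnorm (R : rcfType) (n : nat) (v : 'cV[R]_n) : R :=
  Num.sqrt (\sum_(i < n) v i ord0 ^+ 2).

Definition trs_obj (R : rcfType) (n : nat) (A : 'M[R]_n) (g x : 'cV[R]_n) : R :=
  2^-1 * (x^T *m A *m x) ord0 ord0 + (x^T *m g) ord0 ord0.

Definition smallest_eigenvalue (R : rcfType) (n : nat) (A : 'M[R]_n) (alpha : R) :=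
  eigenvalue A alpha /\ forall b, eigenvalue A b -> alpha <= b.

Definition Mtrs (R : rcfType) (n : nat) (A : 'M[R]_n) (g : 'cV[R]_n) (Delta : R)
  : 'M[R]_(n + n) :=
  block_mx (- A) ((Delta ^+ 2)^-1 *: (g *m g^T)) 1%:M (- A).

From HB Require Import structures.
From mathcomp Require Import all_boot all_order all_algebra.
Import Order.TTheory GRing.Theory Num.Theory.
Local Open Scope ring_scope.

(** Write [B = A + lam I].  The second block row of [M y = lam y] reads
    [y1 = B y2] and the first reads [B y1 = c g] with [c = g^T y2 / Delta^2].
    In the easy case [B] is invertible, and [B xopt = - g] then forces
    [y = - c (xopt, B^-1 xopt)]; the scalar [c] is nonzero because [y] is a
    unit vector, so it cancels from the ratio of the norms of the two blocks,
    and [|xopt| = Delta] gives the claim.  Only [B xopt = - g], [|xopt| = Delta]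
    and the easy case are used. *)

Lemma unitmx_add_scalar (F : fieldType) (n : nat) (A : 'M[F]_n) (lam : F) :
  ~~ eigenvalue A (- lam) -> A + lam%:M \in unitmx.
Proof.
apply: contraR; rewrite unitmxE unitfE negbK => /det0P [v v0 vB0].
apply/eigenvalueP; exists v => //.
by apply/eqP; rewrite scaleNr -addr_eq0 -mul_mx_scalar -mulmxDr vB0.
Qed.

Lemma smallest_eigenvalue_unitmx {R : rcfType} {n : nat} {A : 'M[R]_n}
    {alpha lam : R} :
  smallest_eigenvalue A alpha -> - alpha < lam -> A + lam%:M \in unitmx.
Proof.
move=> [_ alpha_min] lam_gt; apply: unitmx_add_scalar.
by apply: contraTN lam_gt => /alpha_min; rewrite lerNr -leNgt.
Qed.

Section VectorNorm.

Variables (R : rcfType) (n : nat).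
Implicit Types (v w : 'cV[R]_n) (k : R).

Lemma vnorm0 : vnorm (0 : 'cV[R]_n) = 0.
Proof. by rewrite /vnorm big1 ?sqrtr0 // => i _; rewrite mxE expr0n. Qed.

Lemma vnormZ k v : vnorm (k *: v) = `|k| * vnorm v.
Proof.
rewrite /vnorm; under eq_bigr => i _ do rewrite mxE exprMn.
by rewrite -mulr_sumr sqrtrM ?sqr_ge0 // sqrtr_sqr.
Qed.

Lemma vnorm_divZ k v w :
  k != 0 -> vnorm (k *: v) / vnorm (k *: w) = vnorm v / vnorm w.
Proof.
move=> k0; rewrite !vnormZ invfM mulrACA divff ?mul1r //.
by rewrite normr_eq0.
Qed.

End VectorNorm.

Section TrsEigenvector.

Context {R : rcfType} {n : nat} {A : 'M[R]_n} {g : 'cV[R]_n} {Delta lam : R}.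
Let B := A + lam%:M.

Lemma Mtrs_eigenvector_blocks (y1 y2 : 'cV[R]_n) :
  Mtrs A g Delta *m col_mx y1 y2 = lam *: col_mx y1 y2 ->
  y1 = B *m y2 /\ B *m y1 = ((Delta ^+ 2)^-1 * (g^T *m y2) 0 0) *: g.
Proof.
rewrite /Mtrs mul_block_col scale_col_mx => /eq_col_mx [top bottom]; split.
  by rewrite /B mulmxDl mul_scalar_mx -bottom mul1mx mulNmx addrC subrK.
rewrite /B mulmxDl mul_scalar_mx -top mulNmx addNKr -scalemxAl -mulmxA.
by rewrite [g^T *m y2 in LHS]mx11_scalar mul_mx_scalar scalerA.
Qed.

Lemma Mtrs_eigenvectorE {x : 'cV[R]_n} {y : 'cV[R]_(n + n)} :
  B \in unitmx -> B *m x = - g -> Mtrs A g Delta *m y = lam *: y ->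
  exists c : R, y = c *: col_mx x (invmx B *m x).
Proof.
move=> Bunit Bx; rewrite -[y]vsubmxK => /Mtrs_eigenvector_blocks [y1E By1].
set c := _ * _ in By1; exists (- c).
have y1_x : usubmx y = - c *: x.
  rewrite -[usubmx y](mulKmx Bunit) By1 -(mulKmx Bunit x) Bx scalemxAr.
  by rewrite scaleNr scalerN opprK.
suff y2_x : dsubmx y = - c *: (invmx B *m x) by rewrite scale_col_mx -y1_x -y2_x.
by rewrite -[dsubmx y](mulKmx Bunit) -y1E y1_x scalemxAr.
Qed.

End TrsEigenvector.

Theorem lemma5p6 (R : rcfType) (n : nat) (A : 'M[R]_n) (g : 'cV[R]_n)
    (Delta alpha lam : R) (xopt : 'cV[R]_n) (y : 'cV[R]_(n + n)) :
  A^T = A ->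
  smallest_eigenvalue A alpha ->
  g != 0 ->
  0 < Delta ->
  (* xopt is a global minimizer of the trust-region subproblem *)
  vnorm xopt <= Delta ->
  (forall x : 'cV[R]_n, vnorm x <= Delta -> trs_obj A g xopt <= trs_obj A g x) ->
  (* lam is the associated multiplier *)
  0 <= lam ->
  (A + lam%:M) *m xopt = - g ->
  lam * (Delta - vnorm xopt) = 0 ->
  (forall v : 'cV[R]_n, 0 <= (v^T *m (A + lam%:M) *m v) ord0 ord0) ->
  (* easy case *)
  - alpha < lam ->
  vnorm xopt = Delta ->
  (* y is a unit-length eigenvector of M for lam *)
  vnorm y = 1 ->
  Mtrs A g Delta *m y = lam *: y ->
  vnorm (usubmx y) / vnorm (dsubmx y)
    = Delta / vnorm (invmx (A + lam%:M) *m xopt).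
Proof.
move=> _ alpha_min _ _ _ _ _ Bx _ _ easy xopt_norm y_norm y_eig.
have Bunit := smallest_eigenvalue_unitmx alpha_min easy.
have [c yE] := Mtrs_eigenvectorE Bunit Bx y_eig.
have c0 : c != 0.
  apply/eqP => c0; move/eqP: y_norm.
  by rewrite yE c0 scale0r vnorm0 eq_sym oner_eq0.
by rewrite yE scale_col_mx col_mxKu col_mxKd vnorm_divZ // xopt_norm.
Qed.
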